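(* Define sequences $E=(E_n)_{n\ge1}$ and $Q=(q_n)_{n\ge1}$ by concatenating, for $m=1,2,3,\dots$, the block $(0,2,4,\dots,2m-2)$ of length $m$ for $E$ and the block $(2m,2m,\dots,2m)$ of length $m$ for $Q$; thus $E=(0,\,0,2,\,0,2,4,\,0,2,4,6,\dots)$ and $Q=(2,\,4,4,\,6,6,6,\,8,8,8,8,\dots)$. Let $x=\sum_{n=1}^\infty\frac{E_n}{q_1q_2\cdots q_n}$. Then $x$ is $Q$-distribution normal, but $x/2$ is not $Q$-distribution normal.
   Context: Let $T_{Q,n}(x)=\left(\prod_{j=1}^n q_j\right)x \bmod 1$. A real $x$ is $Q$-distribution normal if $(T_{Q,n}(x))_{n\ge0}$ is uniformly distributed modulo $1$. *)

From Stdlib Require Import Reals Lra Lia Arith List.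
Import ListNotations.
Open Scope R_scope.

(* pos k = (m, j): the (k+1)-th term (1-indexed n = k+1) lies in block m
   (block m has length m) at 0-based position j within that block. *)
Fixpoint pos (k : nat) : nat * nat :=
  match k with
  | O => (1%nat, 0%nat)
  | S k' => let (m, j) := pos k' in
            if Nat.ltb (S j) m then (m, S j) else (S m, 0%nat)
  end.

(* E_n for n >= 1: block (0,2,...,2m-2); value at n = 0 is unused. *)
Definition Eseq (n : nat) : nat := (2 * snd (pos (n - 1)))%nat.
(* q_n for n >= 1: block (2m,...,2m); value at n = 0 is unused. *)
Definition qseq (n : nat) : nat := (2 * fst (pos (n - 1)))%nat.

Fixpoint Qprod (n : nat) : R :=
  match n with
  | O => 1
  | S k => Qprod k * INR (qseq (S k))
  end.

Definition TQ (n : nat) (x : R) : R := frac_part (Qprod n * x).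

Fixpoint count_in (s : nat -> R) (a b : R) (N : nat) : nat :=
  match N with
  | O => O
  | S k => (count_in s a b k +
            (if Rle_dec a (s k) then if Rlt_dec (s k) b then 1 else 0 else 0))%nat
  end.

Definition unif_distr_mod1 (s : nat -> R) : Prop :=
  forall a b : R, 0 <= a -> a < b -> b <= 1 ->
    Un_cv (fun N => INR (count_in (fun n => frac_part (s n)) a b N) / INR N) (b - a).

Definition Q_distribution_normal (x : R) : Prop :=
  unif_distr_mod1 (fun n => TQ n x).

(* the i-th summand (i >= 0) of x = sum_{n>=1} E_n / (q_1...q_n), n = i+1 *)
Definition xterm (i : nat) : R := INR (Eseq (S i)) / Qprod (S i).

Example pos_check : map pos (seq 0 7) =
  ((1,0)::(2,0)::(2,1)::(3,0)::(3,1)::(3,2)::(4,0)::nil)%nat.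
Proof. reflexivity. Qed.

(* Let s_n be the n-th partial sum and r_n = (q_1 ... q_n) (x - s_n) the scaled
   tail, so that r_n lies in [0, 1] and r_n q_{n+1} = E_{n+1} + r_{n+1}.  Since
   (q_1 ... q_n) s_n is an even integer, T_{Q,n}(x) = r_n and T_{Q,n}(x/2) = r_n / 2;
   the latter never enters [1/2, 1).  If the (n+1)-th term is the j-th entry of
   block m, then E_{n+1} = 2j and q_{n+1} = 2m force r_n into [j/m, (j+1)/m): each
   block visits each of its m cells exactly once, so among the first N terms the
   number of visits to [0, b) differs from bN by O(m) = O(sqrt N). *)
From Pilot Require Import Defs.
From Stdlib Require Import Reals Lra Lia.
Open Scope R_scope.

Lemma pos_block k m j : Defs.pos k = (m, j) ->
  (1 <= m)%nat /\ (j < m)%nat /\ (2 * k = (m - 1) * m + 2 * j)%nat.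
Proof.
  revert m j; induction k as [|k IH]; intros m j E; simpl in E.
  - injection E as <- <-; lia.
  - destruct (Defs.pos k) as [m' j'].
    destruct (IH m' j' eq_refl) as (Hm' & Hj' & Hk).
    destruct (Nat.ltb_spec (S j') m'); injection E as <- <-; [lia|].
    replace j' with (m' - 1)%nat in Hk by lia.
    destruct m' as [|m']; [lia|]; simpl; nia.
Qed.

Lemma Eseq_S n : Eseq (S n) = (2 * snd (Defs.pos n))%nat.
Proof. unfold Eseq; now rewrite Nat.sub_1_r. Qed.

Lemma qseq_S n : qseq (S n) = (2 * fst (Defs.pos n))%nat.
Proof. unfold qseq; now rewrite Nat.sub_1_r. Qed.

Lemma qseq_S_pos n : 0 < INR (qseq (S n)).
Proof.
  rewrite qseq_S; destruct (Defs.pos n) as [m j] eqn:E.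
  apply lt_0_INR; destruct (pos_block n m j E); simpl; lia.
Qed.

Lemma Qprod_pos n : 0 < Qprod n.
Proof.
  induction n as [|n IH]; simpl; [lra|].
  apply Rmult_lt_0_compat; [exact IH | apply qseq_S_pos].
Qed.

Fixpoint psum (n : nat) : R :=
  match n with O => 0 | S k => psum k + xterm k end.

Lemma sum_f_R0_psum n : sum_f_R0 xterm n = psum (S n).
Proof. induction n as [|n IH]; simpl in *; lra. Qed.

Lemma xterm_nonneg n : 0 <= xterm n.
Proof.
  apply Rmult_le_pos; [apply pos_INR|].
  left; apply Rinv_0_lt_compat, Qprod_pos.
Qed.

(* E_{n+1} <= q_{n+1} - 1 makes each term at most the telescoping difference. *)
Lemma xterm_le_telescope n : xterm n <= / Qprod n - / Qprod (S n).
Proof.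
  unfold xterm; simpl Qprod.
  assert (HE : INR (Eseq (S n)) + 1 <= INR (qseq (S n))).
  { rewrite <- S_INR; apply le_INR.
    rewrite Eseq_S, qseq_S; destruct (Defs.pos n) as [m j] eqn:E.
    destruct (pos_block n m j E); simpl; lia. }
  pose proof (Qprod_pos n); pose proof (qseq_S_pos n).
  replace (/ Qprod n - / (Qprod n * INR (qseq (S n))))
    with ((INR (qseq (S n)) - 1) / (Qprod n * INR (qseq (S n)))) by (field; lra).
  apply Rmult_le_compat_r; [|lra].
  left; apply Rinv_0_lt_compat, Rmult_lt_0_compat; assumption.
Qed.

Lemma psum_add_le n d : psum (n + d) <= psum n + / Qprod n - / Qprod (n + d).
Proof.
  induction d as [|d IH]; rewrite ?Nat.add_0_r, ?Nat.add_succ_r; [lra|].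
  simpl psum; pose proof (xterm_le_telescope (n + d)); lra.
Qed.

Lemma xterm_summable : exists x, infinite_sum xterm x.
Proof.
  assert (Hgrow : Un_growing (sum_f_R0 xterm)).
  { intros n; simpl; pose proof (xterm_nonneg (S n)); lra. }
  assert (Hbound : has_ub (sum_f_R0 xterm)).
  { exists 1; intros y [n ->]; rewrite sum_f_R0_psum.
    pose proof (psum_add_le 0 (S n)).
    pose proof (Rinv_0_lt_compat _ (Qprod_pos (S n))); simpl in *; lra. }
  destruct (growing_cv _ Hgrow Hbound) as [x Hx]; now exists x.
Qed.

Lemma Un_cv_le_const (u : nat -> R) l c : Un_cv u l -> (forall n, u n <= c) -> l <= c.
Proof.
  intros Hu Hc; apply (Rle_cv_lim Hc Hu).
  intros eps Heps; exists 0%nat; intros n _.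
  unfold Rdist; rewrite Rminus_diag, Rabs_R0; lra.
Qed.

Lemma psum_bounds x n : infinite_sum xterm x -> psum n <= x <= psum n + / Qprod n.
Proof.
  intros Hx; split.
  - apply Rle_trans with (psum (S n)); [simpl; pose proof (xterm_nonneg n); lra|].
    rewrite <- sum_f_R0_psum; exact (sum_incr _ _ _ Hx xterm_nonneg).
  - apply (Un_cv_le_const _ _ _ (CV_shift' _ n _ Hx)); intros k.
    rewrite sum_f_R0_psum, Nat.add_comm, <- Nat.add_succ_r.
    pose proof (psum_add_le n (S k)).
    pose proof (Rinv_0_lt_compat _ (Qprod_pos (n + S k))); lra.
Qed.

Lemma frac_part_INR_add k r : 0 <= r < 1 -> frac_part (INR k + r) = r.
Proof.
  intros Hr; rewrite INR_IZR_INZ.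
  now destruct (Int_part_frac_part_spec _ (Z.of_nat k) r Hr eq_refl).
Qed.

Lemma frac_part_id r : 0 <= r < 1 -> frac_part r = r.
Proof. intros Hr; rewrite <- (Rplus_0_l r) at 1; exact (frac_part_INR_add 0 r Hr). Qed.

Definition block_adapted (r : nat -> R) : Prop :=
  forall n m j, Defs.pos n = (m, j) -> INR j <= r n * INR m < INR j + 1.

Lemma block_adapted_range r : block_adapted r -> forall n, 0 <= r n < 1.
Proof.
  intros Hr n; destruct (Defs.pos n) as [m j] eqn:E.
  destruct (pos_block n m j E) as (Hm & Hj & _).
  destruct (Hr n m j E) as [Hlo Hhi].
  assert (Hm0 : 0 < INR m) by (apply lt_0_INR; lia).
  assert (Hjm : INR j + 1 <= INR m) by (rewrite <- S_INR; apply le_INR; lia).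
  pose proof (pos_INR j); split; nra.
Qed.

Lemma Qprod_psum_even n : exists k, Qprod n * psum n = 2 * INR k.
Proof.
  induction n as [|n [k IH]]; [exists 0%nat; simpl; lra|].
  exists (qseq (S n) * k + snd (Defs.pos n))%nat.
  simpl Qprod; simpl psum; unfold xterm; simpl Qprod.
  pose proof (Qprod_pos n); pose proof (qseq_S_pos n).
  rewrite plus_INR, mult_INR, Eseq_S, mult_INR; simpl (INR 2).
  transitivity (INR (qseq (S n)) * (Qprod n * psum n) + 2 * INR (snd (Defs.pos n)));
    [field; lra | rewrite IH; ring].
Qed.

Section Tail.

Variable x : R.
Hypothesis x_sum : infinite_sum xterm x.

Definition tail n := Qprod n * (x - psum n).

Lemma tail_bounds n : 0 <= tail n <= 1.
Proof.
  pose proof (psum_bounds x n x_sum); pose proof (Qprod_pos n); unfold tail; split.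
  - apply Rmult_le_pos; lra.
  - replace 1 with (Qprod n * / Qprod n) by (field; lra).
    apply Rmult_le_compat_l; lra.
Qed.

Lemma tail_S n : tail n * INR (qseq (S n)) = INR (Eseq (S n)) + tail (S n).
Proof.
  unfold tail; simpl psum; unfold xterm; simpl Qprod.
  pose proof (Qprod_pos n); pose proof (qseq_S_pos n); field; lra.
Qed.

Lemma tail_block_adapted : block_adapted tail.
Proof.
  intros n m j E; pose proof (tail_S n) as Hrec; pose proof (tail_bounds (S n)).
  rewrite qseq_S, Eseq_S, E, !mult_INR in Hrec; simpl (INR 2) in Hrec; simpl in Hrec.
  lra.
Qed.

Lemma TQ_tail n : TQ n x = tail n.
Proof.
  destruct (Qprod_psum_even n) as [k Hk].
  unfold TQ; replace (Qprod n * x) with (INR (2 * k) + tail n).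
  - exact (frac_part_INR_add _ _ (block_adapted_range _ tail_block_adapted n)).
  - unfold tail; rewrite mult_INR; simpl (INR 2); lra.
Qed.

Lemma TQ_half_tail n : TQ n (x / 2) = tail n / 2.
Proof.
  destruct (Qprod_psum_even n) as [k Hk].
  pose proof (block_adapted_range _ tail_block_adapted n).
  unfold TQ; replace (Qprod n * (x / 2)) with (INR k + tail n / 2).
  - apply frac_part_INR_add; lra.
  - unfold tail; lra.
Qed.

End Tail.

Section BlockCount.

Variable r : nat -> R.
Hypothesis r_adapted : block_adapted r.
Variable b : R.
Hypothesis b_range : 0 <= b <= 1.

Lemma count_in_S_cases N m j : Defs.pos N = (m, j) ->
  (count_in r 0 b (S N) = S (count_in r 0 b N) /\ INR j < b * INR m) \/
  (count_in r 0 b (S N) = count_in r 0 b N /\ b * INR m < INR j + 1).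
Proof.
  intros E; destruct (r_adapted N m j E) as [Hlo Hhi].
  destruct (pos_block N m j E) as (Hm & _).
  assert (Hm0 : 0 < INR m) by (apply lt_0_INR; lia).
  simpl count_in; destruct (Rle_dec 0 (r N)) as [_|Hneg];
    [|pose proof (block_adapted_range r r_adapted N); lra].
  destruct (Rlt_dec (r N) b); [left|right]; (split; [lia|nra]).
Qed.

(* The completed blocks 1, ..., m-1 contribute b (N - j) up to an error 1 each;
   the first j terms of block m lie in the cells [i/m, (i+1)/m), i < j, so
   between min(j, bm - 1) and min(j, bm + 1) of them fall below b. *)
Lemma count_in_block N m j : Defs.pos N = (m, j) ->
  b * (INR N - INR j) - (INR m - 1) + Rmin (INR j) (b * INR m - 1)
    <= INR (count_in r 0 b N) <=
  b * (INR N - INR j) + (INR m - 1) + Rmin (INR j) (b * INR m + 1).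
Proof.
  revert m j; induction N as [|N IH]; intros m j E.
  - simpl in E; injection E as <- <-; simpl; unfold Rmin.
    destruct (Rle_dec _ _), (Rle_dec _ _); lra.
  - destruct (Defs.pos N) as [m0 j0] eqn:E0.
    destruct (pos_block N m0 j0 E0) as (Hm0 & Hj0 & _).
    specialize (IH m0 j0 eq_refl).
    assert (Hm1 : 1 <= INR m0) by (rewrite <- INR_1; apply le_INR; lia).
    assert (Hbm : 0 <= b * INR m0 <= INR m0) by (split; nra).
    simpl in E; rewrite E0 in E; rewrite S_INR.
    destruct (Nat.ltb_spec (S j0) m0) as [Hlt|Hge]; injection E as <- <-.
    + rewrite S_INR.
      destruct (count_in_S_cases N m0 j0 E0) as [[-> Hb]|[-> Hb]]; rewrite ?S_INR;
        unfold Rmin in *; repeat destruct (Rle_dec _ _); nra.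
    + assert (Hlast : INR m0 = INR j0 + 1) by (rewrite <- S_INR; f_equal; lia).
      rewrite S_INR; simpl (INR 0).
      destruct (count_in_S_cases N m0 j0 E0) as [[-> Hb]|[-> Hb]]; rewrite ?S_INR;
        unfold Rmin in *; repeat destruct (Rle_dec _ _); nra.
Qed.

Lemma count_in_dev N :
  Rabs (INR (count_in r 0 b N) - b * INR N) <= 2 * INR (fst (Defs.pos N)).
Proof.
  destruct (Defs.pos N) as [m j] eqn:E; simpl fst.
  destruct (pos_block N m j E) as (_ & Hj & _).
  assert (Hjm : INR j <= INR m) by (apply le_INR; lia).
  pose proof (pos_INR j); pose proof (count_in_block N m j E).
  apply Rabs_le; unfold Rmin in *; repeat destruct (Rle_dec _ _); split; nra.
Qed.

Lemma block_index_negligible : Un_cv (fun N => INR (fst (Defs.pos N)) / INR N) 0.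
Proof.
  intros eps Heps.
  destruct (INR_archimed eps 2 Heps) as [K HK].
  destruct (INR_archimed eps (INR K) Heps) as [N0 HN0].
  exists N0; intros N HN; unfold Rdist; rewrite Rminus_0_r.
  destruct (Defs.pos N) as [m j] eqn:E; simpl fst.
  destruct (pos_block N m j E) as (Hm & _ & HN2).
  assert (HNN0 : INR N0 <= INR N) by (apply le_INR; lia).
  assert (HN0pos : 0 < INR N) by (pose proof (pos_INR K); nra).
  rewrite Rabs_pos_eq
    by (apply Rmult_le_pos; [apply pos_INR | left; now apply Rinv_0_lt_compat]).
  apply (Rmult_lt_reg_r (INR N)); [exact HN0pos|].
  unfold Rdiv; rewrite Rmult_assoc, Rinv_l, Rmult_1_r by lra.
  destruct (Nat.le_gt_cases m K) as [HmK|HmK].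
  - apply le_INR in HmK; nra.
  - assert (HK1 : INR K <= INR m - 1)
      by (rewrite <- INR_1, <- minus_INR by lia; apply le_INR; lia).
    assert (Hsq : (INR m - 1) * INR m <= 2 * INR N).
    { rewrite <- INR_1, <- minus_INR, <- mult_INR by lia.
      replace 2 with (INR 2) by reflexivity; rewrite <- mult_INR; apply le_INR; lia. }
    assert (Hm0 : 0 < INR m) by (apply lt_0_INR; lia).
    assert (INR K * INR m <= 2 * INR N) by nra.
    nra.
Qed.

Lemma count_in_cv : Un_cv (fun N => INR (count_in r 0 b N) / INR N) b.
Proof.
  intros eps Heps.
  destruct (block_index_negligible (eps / 2)) as [N0 HN0]; [lra|].
  exists (S N0); intros N HN; specialize (HN0 N ltac:(lia)).
  assert (HNpos : 0 < INR N) by (apply lt_0_INR; lia).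
  unfold Rdist in *; rewrite Rminus_0_r, Rabs_pos_eq in HN0
    by (apply Rmult_le_pos; [apply pos_INR | left; now apply Rinv_0_lt_compat]).
  replace (INR (count_in r 0 b N) / INR N - b)
    with ((INR (count_in r 0 b N) - b * INR N) / INR N) by (field; lra).
  unfold Rdiv in *; rewrite Rabs_mult, Rabs_inv, (Rabs_pos_eq (INR N)) by lra.
  pose proof (count_in_dev N); pose proof (Rinv_0_lt_compat _ HNpos); nra.
Qed.

End BlockCount.

Lemma count_in_split s a b N : 0 <= a <= b -> (forall n, 0 <= s n) ->
  count_in s 0 b N = (count_in s 0 a N + count_in s a b N)%nat.
Proof.
  intros Hab Hs; induction N as [|N IH]; [reflexivity|].
  simpl; rewrite IH; pose proof (Hs N).
  destruct (Rle_dec 0 (s N)), (Rlt_dec (s N) b), (Rlt_dec (s N) a), (Rle_dec a (s N));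
    lra || lia.
Qed.

Lemma unif_distr_mod1_of_block_adapted r : block_adapted r -> unif_distr_mod1 r.
Proof.
  intros Hr a b Ha Hab Hb.
  set (s := fun n => frac_part (r n)).
  assert (Hs : block_adapted s).
  { intros n m j E; unfold s; rewrite frac_part_id by exact (block_adapted_range r Hr n).
    exact (Hr n m j E). }
  apply Un_cv_ext with
    (fun N => INR (count_in s 0 b N) / INR N - INR (count_in s 0 a N) / INR N).
  - intros N; rewrite (count_in_split s a b N), plus_INR; [unfold Rdiv; ring | lra |].
    intros n; apply (block_adapted_range s Hs).
  - apply CV_minus; apply count_in_cv; auto; lra.
Qed.

Lemma not_unif_distr_mod1_of_lt s c : c < 1 -> (forall n, 0 <= s n < c) ->
  ~ unif_distr_mod1 s.
Proof.
  intros Hc Hs Hud; pose proof (Hs 0%nat) as Hs0.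
  assert (Hcount : forall N, count_in (fun n => frac_part (s n)) c 1 N = 0%nat).
  { induction N as [|N IH]; [reflexivity|]; simpl; rewrite IH.
    rewrite frac_part_id by (pose proof (Hs N); lra).
    destruct (Rle_dec c (s N)); [pose proof (Hs N); lra | reflexivity]. }
  assert (Hzero : Un_cv (fun N => INR (count_in (fun n => frac_part (s n)) c 1 N) / INR N) 0).
  { intros eps Heps; exists 0%nat; intros N _; rewrite Hcount; unfold Rdist, Rdiv.
    rewrite Rmult_0_l, Rminus_0_r, Rabs_R0; lra. }
  pose proof (UL_sequence _ _ _ (Hud c 1 ltac:(lra) Hc ltac:(lra)) Hzero); lra.
Qed.

Theorem mainTheorem4 :
  (exists x : R, infinite_sum xterm x) /\
  (forall x : R, infinite_sum xterm x ->
     Q_distribution_normal x /\ ~ Q_distribution_normal (x / 2)).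
Proof.
  split; [exact xterm_summable|]; intros x Hx; split.
  - apply unif_distr_mod1_of_block_adapted; intros n m j E.
    rewrite (TQ_tail x Hx); exact (tail_block_adapted x Hx n m j E).
  - apply (not_unif_distr_mod1_of_lt _ (1 / 2)); [lra|]; intros n.
    rewrite (TQ_half_tail x Hx).
    pose proof (block_adapted_range _ (tail_block_adapted x Hx) n); lra.
Qed.
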